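(* The quadric surface $Q$ meets the octic $R$ only within the singular locus of $R$; in fact $$Q\cap R\subset S_{(x_0,x_1)}\cup S_{(x_0,x_2)}\cup S_{(x_1,x_2)}\cup S_{(x_3,x_4)}.$$
   Context: Let $\Delta'(x_0,\ldots,x_4):=\prod_{i_1,\ldots,i_4\in\{0,1\}}\big(\sqrt{x_0}+(-1)^{i_1}\sqrt{x_1}+\cdots+(-1)^{i_4}\sqrt{x_4}\big)\in\mathbb{Q}[x_0,\ldots,x_4]$ (degree $8$), and let $R\subset\mathbf{P}^4$ be the octic threefold $\Delta'=0$. $Q\subset\mathbf{P}^4$ is the quadric surface $l=q=0$ with $l:=x_0+x_1+x_2-3x_3-3x_4$ and $q:=x_0^2+x_1^2+x_2^2+9x_3^2-x_0x_1-x_0x_2-3x_0x_3-x_1x_2-3x_1x_3-3x_2x_3$. For $0\le i<j\le4$, $S_{(x_i,x_j)}\subset\mathbf{P}^4$ is the surface given by $x_i=x_j$ and $x_k^2+x_l^2+x_m^2-2x_kx_l-2x_kx_m-2x_lx_m=0$, where $\{k,l,m\}=\{0,\ldots,4\}\setminus\{i,j\}$. *)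

From HB Require Import structures.
From mathcomp Require Import all_boot all_order all_algebra.
From mathcomp Require Import mpoly.
Set Implicit Arguments. Unset Strict Implicit. Unset Printing Implicit Defensive.
Import Order.TTheory GRing.Theory Num.Theory.
Local Open Scope ring_scope.

(* Product over sign vectors (i1,...,i4) in {0,1}^4 of
   s0 + (-1)^i1 s1 + ... + (-1)^i4 s4, as a polynomial in the "square
   roots" s0,...,s4.  It is even in each variable. *)
Definition sqrtProd (R : comNzRingType) : {mpoly R[5]} :=
  \prod_(e : {ffun 'I_4 -> bool})
     ('X_ord0 + \sum_(k < 4) ((-1) ^+ (e k : nat)) *: 'X_(lift ord0 k)).

Definition mhalf (m : 'X_{1..5}) : 'X_{1..5} := [multinom (m i)./2 | i < 5].

(* Delta'(x0,...,x4): the polynomial D with D(s0^2,...,s4^2) = sqrtProd(s);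
   obtained from sqrtProd by replacing each monomial s^(2a) by x^a
   (only monomials with even exponents occur in sqrtProd). *)
Definition Delta' (R : comNzRingType) : {mpoly R[5]} :=
  \sum_(m <- msupp (sqrtProd R)) ((sqrtProd R)@_m *: 'X_[mhalf m]).

Section Geometry.
Variable C : numClosedFieldType.
Implicit Types x : 'I_5 -> C.

Definition i0 : 'I_5 := @Ordinal 5 0 isT.
Definition i1 : 'I_5 := @Ordinal 5 1 isT.
Definition i2 : 'I_5 := @Ordinal 5 2 isT.
Definition i3 : 'I_5 := @Ordinal 5 3 isT.
Definition i4 : 'I_5 := @Ordinal 5 4 isT.

(* x represents a point of P^4 (homogeneous coordinates, not all zero) *)
Definition proj_point x : Prop := exists i, x i != 0.

Definition inR x : Prop := (Delta' C).@[x] = 0.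

(* singular locus of R (Jacobian criterion) *)
Definition inSingR x : Prop :=
  (Delta' C).@[x] = 0 /\ forall i : 'I_5, ((Delta' C)^`M(i)).@[x] = 0.

Definition lform x : C := x i0 + x i1 + x i2 - 3 * x i3 - 3 * x i4.
Definition qform x : C :=
  x i0 ^+ 2 + x i1 ^+ 2 + x i2 ^+ 2 + 9 * x i3 ^+ 2
  - x i0 * x i1 - x i0 * x i2 - 3 * x i0 * x i3
  - x i1 * x i2 - 3 * x i1 * x i3 - 3 * x i2 * x i3.

Definition inQ x : Prop := lform x = 0 /\ qform x = 0.

(* S_(x_i,x_j) with {k,l,m} the complementary indices *)
Definition inS (i j k l m : 'I_5) x : Prop :=
  x i = x j /\
  x k ^+ 2 + x l ^+ 2 + x m ^+ 2
  - 2 * x k * x l - 2 * x k * x m - 2 * x l * x m = 0.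

End Geometry.

From mathcomp Require Import all_boot all_algebra.
From mathcomp Require Import ssrcomplements mpoly ring.
Import GRing.Theory Num.Theory.
Local Open Scope ring_scope.
Set Implicit Arguments. Unset Strict Implicit. Unset Printing Implicit Defensive.

(* Write x_i = t_i^2.  Then Delta'(x) is the product of the sixteen signed sums
   t_0 +- t_1 +- ... +- t_4, so on R one of them vanishes, and absorbing the signs
   into t we may assume t_0 + ... + t_4 = 0.  Modulo this relation,
   24 u (t_0 + u) (t_1 + u) (t_2 + u) = l (l - 12 t_3^2 - 12 t_3 t_4) - 4 q with
   u = t_3 + t_4, so on Q one of the four factors vanishes.  Each factor puts x on
   one of the surfaces S, in a family along which two signed sums vanish at once;
   there the gradient of Delta' vanishes, which is checked on Delta' written in
   the elementary symmetric functions of x. *)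

Section SymmetricForm.
Variable R : comNzRingType.

(* Delta' in terms of the elementary symmetric functions e_k of its arguments;
   [delta_esym_dk] is the partial derivative of [delta_esym] in [e_k]. *)
Definition delta_esym (e1 e2 e3 e4 e5 : R) : R :=
  e1^+8 - 2^+4 * e1^+6 * e2 + 2^+5 * 3 * e1^+4 * e2^+2 - 2^+7 * e1^+4 * e4
  - 2^+11 * e1^+3 * e5 - 2^+8 * e1^+2 * e2^+3 + 2^+10 * e1^+2 * e2 * e4
  + 2^+13 * e1 * e2 * e5 + 2^+8 * e2^+4 - 2^+11 * e2^+2 * e4
  - 2^+14 * e3 * e5 + 2^+12 * e4^+2.

Definition delta_esym_d1 (e1 e2 e3 e4 e5 : R) : R :=
  2^+3 * e1^+7 - 2^+5 * 3 * e1^+5 * e2 + 2^+7 * 3 * e1^+3 * e2^+2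
  - 2^+9 * e1^+3 * e4 - 2^+11 * 3 * e1^+2 * e5 - 2^+9 * e1 * e2^+3
  + 2^+11 * e1 * e2 * e4 + 2^+13 * e2 * e5.
Definition delta_esym_d2 (e1 e2 e3 e4 e5 : R) : R :=
  - 2^+4 * e1^+6 + 2^+6 * 3 * e1^+4 * e2 - 2^+8 * 3 * e1^+2 * e2^+2
  + 2^+10 * e1^+2 * e4 + 2^+13 * e1 * e5 + 2^+10 * e2^+3 - 2^+12 * e2 * e4.
Definition delta_esym_d3 (e1 e2 e3 e4 e5 : R) : R := - 2^+14 * e5.
Definition delta_esym_d4 (e1 e2 e3 e4 e5 : R) : R :=
  - 2^+7 * e1^+4 + 2^+10 * e1^+2 * e2 - 2^+11 * e2^+2 + 2^+13 * e4.
Definition delta_esym_d5 (e1 e2 e3 e4 e5 : R) : R :=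
  - 2^+11 * e1^+3 + 2^+13 * e1 * e2 - 2^+14 * e3.

Definition esym1 (x0 x1 x2 x3 x4 : R) : R := x0 + x1 + x2 + x3 + x4.
Definition esym2 (x0 x1 x2 x3 x4 : R) : R :=
  x0*x1 + x0*x2 + x0*x3 + x0*x4 + x1*x2 + x1*x3 + x1*x4 + x2*x3 + x2*x4 + x3*x4.
Definition esym3 (x0 x1 x2 x3 x4 : R) : R :=
  x0*x1*x2 + x0*x1*x3 + x0*x1*x4 + x0*x2*x3 + x0*x2*x4 + x0*x3*x4
  + x1*x2*x3 + x1*x2*x4 + x1*x3*x4 + x2*x3*x4.
Definition esym4 (x0 x1 x2 x3 x4 : R) : R :=
  x0*x1*x2*x3 + x0*x1*x2*x4 + x0*x1*x3*x4 + x0*x2*x3*x4 + x1*x2*x3*x4.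
Definition esym5 (x0 x1 x2 x3 x4 : R) : R := x0*x1*x2*x3*x4.

Definition esym_eval (F : R -> R -> R -> R -> R -> R) (x0 x1 x2 x3 x4 : R) : R :=
  F (esym1 x0 x1 x2 x3 x4) (esym2 x0 x1 x2 x3 x4) (esym3 x0 x1 x2 x3 x4)
    (esym4 x0 x1 x2 x3 x4) (esym5 x0 x1 x2 x3 x4).

Definition delta5 : R -> R -> R -> R -> R -> R := esym_eval delta_esym.

(* The partial derivative in the coordinate whose four companions are z1..z4:
   the derivative of e_k in one variable is e_(k-1) of the other four. *)
Definition delta5_partial (x0 x1 x2 x3 x4 z1 z2 z3 z4 : R) : R :=
  esym_eval delta_esym_d1 x0 x1 x2 x3 x4
  + esym_eval delta_esym_d2 x0 x1 x2 x3 x4 * (z1 + z2 + z3 + z4)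
  + esym_eval delta_esym_d3 x0 x1 x2 x3 x4
    * (z1*z2 + z1*z3 + z1*z4 + z2*z3 + z2*z4 + z3*z4)
  + esym_eval delta_esym_d4 x0 x1 x2 x3 x4
    * (z1*z2*z3 + z1*z2*z4 + z1*z3*z4 + z2*z3*z4)
  + esym_eval delta_esym_d5 x0 x1 x2 x3 x4 * (z1*z2*z3*z4).

Definition delta5_deriv (x0 x1 x2 x3 x4 v0 v1 v2 v3 v4 : R) : R :=
  v0 * delta5_partial x0 x1 x2 x3 x4 x1 x2 x3 x4
  + v1 * delta5_partial x0 x1 x2 x3 x4 x0 x2 x3 x4
  + v2 * delta5_partial x0 x1 x2 x3 x4 x0 x1 x3 x4
  + v3 * delta5_partial x0 x1 x2 x3 x4 x0 x1 x2 x4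
  + v4 * delta5_partial x0 x1 x2 x3 x4 x0 x1 x2 x3.

End SymmetricForm.

Section Morphism.
Variables (R S : comNzRingType) (f : {rmorphism R -> S}).

Lemma rmorph_esym x0 x1 x2 x3 x4 :
  [/\ f (esym1 x0 x1 x2 x3 x4) = esym1 (f x0) (f x1) (f x2) (f x3) (f x4),
      f (esym2 x0 x1 x2 x3 x4) = esym2 (f x0) (f x1) (f x2) (f x3) (f x4),
      f (esym3 x0 x1 x2 x3 x4) = esym3 (f x0) (f x1) (f x2) (f x3) (f x4),
      f (esym4 x0 x1 x2 x3 x4) = esym4 (f x0) (f x1) (f x2) (f x3) (f x4) &
      f (esym5 x0 x1 x2 x3 x4) = esym5 (f x0) (f x1) (f x2) (f x3) (f x4)].
Proof. by split; rewrite !(rmorphD, rmorphM). Qed.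

Lemma rmorph_delta5 x0 x1 x2 x3 x4 :
  f (delta5 x0 x1 x2 x3 x4) = delta5 (f x0) (f x1) (f x2) (f x3) (f x4).
Proof.
have [E1 E2 E3 E4 E5] := rmorph_esym x0 x1 x2 x3 x4.
rewrite /delta5 /esym_eval -E1 -E2 -E3 -E4 -E5.
move: (esym1 _ _ _ _ _) (esym2 _ _ _ _ _) (esym3 _ _ _ _ _) => e1 e2 e3.
move: (esym4 _ _ _ _ _) (esym5 _ _ _ _ _) => e4 e5.
by rewrite /delta_esym !(rmorph_nat, rmorphD, rmorphB, rmorphN, rmorphM, rmorphXn).
Qed.

End Morphism.

Section ChainRule.
(* [d] is a derivation along the ring morphism [ev]; below, [ev] is evaluation
   at a point x and [d p] is the value at x of the partial derivative of p. *)
Variables (A B : comNzRingType) (ev : {rmorphism A -> B}) (d : A -> B).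
Hypotheses (dD : {morph d : a b / a + b}) (dN : {morph d : a / - a}).
Hypothesis dM : forall a b, d (a * b) = d a * ev b + ev a * d b.

Lemma deriv1 : d 1 = 0.
Proof.
have d11 := dM 1 1; rewrite mulr1 rmorph1 mulr1 mul1r in d11.
by apply: (addrI (d 1)); rewrite -d11 addr0.
Qed.

Lemma deriv_nat n : d n%:R = 0.
Proof.
elim: n => [|n IH].
  by have := dM 0 0; rewrite rmorph0 !mulr0 mul0r addr0.
by rewrite -natr1 dD IH deriv1 addr0.
Qed.

Lemma deriv_exp a n : d (a ^+ n) = n%:R * ev a ^+ n.-1 * d a.
Proof.
elim: n => [|n IH]; first by rewrite expr0 deriv1 !mul0r.
rewrite exprS dM IH rmorphXn; case: n {IH} => [|n] /=; first by ring.
rewrite exprS; ring.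
Qed.

Lemma deriv_delta_esym p1 p2 p3 p4 p5 :
  d (delta_esym p1 p2 p3 p4 p5) =
  delta_esym_d1 (ev p1) (ev p2) (ev p3) (ev p4) (ev p5) * d p1
  + delta_esym_d2 (ev p1) (ev p2) (ev p3) (ev p4) (ev p5) * d p2
  + delta_esym_d3 (ev p1) (ev p2) (ev p3) (ev p4) (ev p5) * d p3
  + delta_esym_d4 (ev p1) (ev p2) (ev p3) (ev p4) (ev p5) * d p4
  + delta_esym_d5 (ev p1) (ev p2) (ev p3) (ev p4) (ev p5) * d p5.
Proof.
rewrite /delta_esym /delta_esym_d1 /delta_esym_d2 /delta_esym_d3.
rewrite /delta_esym_d4 /delta_esym_d5 !(deriv_nat, dD, dN, dM, deriv_exp) /=.
rewrite !(rmorph_nat, rmorphD, rmorphN, rmorphM, rmorphXn).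
move: (ev p1) (ev p2) (ev p3) (ev p4) (ev p5) => a1 a2 a3 a4 a5.
move: (d p1) (d p2) (d p3) (d p4) (d p5) => d1 d2 d3 d4 d5.
ring.
Qed.

Lemma deriv_delta5 a0 a1 a2 a3 a4 :
  d (delta5 a0 a1 a2 a3 a4) =
  delta5_deriv (ev a0) (ev a1) (ev a2) (ev a3) (ev a4)
               (d a0) (d a1) (d a2) (d a3) (d a4).
Proof.
have [E1 E2 E3 E4 E5] := rmorph_esym ev a0 a1 a2 a3 a4.
rewrite /delta5 /esym_eval deriv_delta_esym E1 E2 E3 E4 E5.
rewrite /delta5_deriv /delta5_partial /esym_eval.
set f1 := delta_esym_d1 _ _ _ _ _. set f2 := delta_esym_d2 _ _ _ _ _.
set f3 := delta_esym_d3 _ _ _ _ _. set f4 := delta_esym_d4 _ _ _ _ _.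
set f5 := delta_esym_d5 _ _ _ _ _.
rewrite /esym1 /esym2 /esym3 /esym4 /esym5 !(dD, dM) !(rmorphD, rmorphM).
ring.
Qed.

End ChainRule.

Section HalvingExponents.
Variable R : comNzRingType.
Implicit Types (p q : {mpoly R[5]}) (m : 'X_{1..5}).

Definition mpoly_half p : {mpoly R[5]} :=
  \sum_(m <- msupp p) (p@_m *: 'X_[mhalf m]).

Lemma mpoly_halfE p k : (msize p <= k)%N ->
  mpoly_half p = \sum_(m : 'X_{1..5 < k}) (p@_m *: 'X_[mhalf m]).
Proof.
move=> le_pk; rewrite /mpoly_half (big_mksub 'X_{1..5 < k}) ?msupp_uniq //=.
  by rewrite big_rmcond //= => m /memN_msupp_eq0 ->; rewrite scale0r.
by move=> m /msize_mdeg_lt /leq_trans; apply.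
Qed.

Lemma mpoly_halfD p q : mpoly_half (p + q) = mpoly_half p + mpoly_half q.
Proof.
pose k := (msize p + msize q + msize (p + q))%N.
have le_p : (msize p <= k)%N by rewrite /k -addnA leq_addr.
have le_q : (msize q <= k)%N by rewrite /k (addnC (msize p)) -addnA leq_addr.
have le_pq : (msize (p + q) <= k)%N by rewrite /k leq_addl.
rewrite (mpoly_halfE le_p) (mpoly_halfE le_q) (mpoly_halfE le_pq) -big_split.
by apply/eq_bigr => m _; rewrite mcoeffD scalerDl.
Qed.

Lemma mpoly_half0 : mpoly_half 0 = 0.
Proof. by apply/(addrI (mpoly_half 0)); rewrite -mpoly_halfD !addr0. Qed.

Lemma mhalf_double m : mhalf (m *+ 2) = m.
Proof. by apply/mnmP => i; rewrite mnmE mulmnE muln2 doubleK. Qed.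

Lemma mpoly_halfZX c m : mpoly_half (c *: 'X_[m *+ 2]) = c *: 'X_[m].
Proof.
have [->|c_neq0] := eqVneq c 0; first by rewrite !scale0r mpoly_half0.
by rewrite /mpoly_half msuppMCX // big_seq1 mcoeffZ mcoeffX eqxx mulr1 mhalf_double.
Qed.

Definition squares : 5.-tuple {mpoly R[5]} := [tuple 'X_i ^+ 2 | i < 5].

Lemma comp_squaresX m : 'X_[m] \mPo squares = 'X_[m *+ 2].
Proof.
rewrite comp_mpolyX -mpolyXn mpolyXE_id -prodrXl; apply: eq_bigr => i _.
by rewrite tnth_map tnth_ord_tuple exprAC.
Qed.

Lemma comp_squaresXU i : 'X_i \mPo squares = 'X_i ^+ 2.
Proof. by rewrite comp_mpolyXU -tnth_nth tnth_map tnth_ord_tuple. Qed.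

Lemma mpoly_half_squares p : mpoly_half (p \mPo squares) = p.
Proof.
rewrite {1}[p]mpolyE raddf_sum /= (big_morph _ mpoly_halfD mpoly_half0) [RHS]mpolyE.
by apply: eq_bigr => m _; rewrite comp_mpolyZ comp_squaresX mpoly_halfZX.
Qed.

End HalvingExponents.

Lemma sum_ord5 (V : nmodType) (F : 'I_5 -> V) :
  \sum_(i < 5) F i = F i0 + F i1 + F i2 + F i3 + F i4.
Proof.
rewrite !big_ord_recl big_ord0 addr0 !addrA.
by congr (_ + _ + _ + _ + _); apply: (congr1 F); apply: val_inj.
Qed.

Definition sign_of (e : {ffun 'I_4 -> bool}) (i : 'I_5) : bool :=
  if unlift ord0 i is Some k then e k else false.

Definition ffun_of_bools (b : bool * bool * bool * bool) : {ffun 'I_4 -> bool} :=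
  [ffun k : 'I_4 => nth false [:: b.1.1.1; b.1.1.2; b.1.2; b.2] k].

Lemma ffun_of_bools_bij : bijective ffun_of_bools.
Proof.
exists (fun e : {ffun 'I_4 -> bool} => (e (inord 0), e (inord 1), e (inord 2), e (inord 3))).
  by case=> [[[b1 b2] b3] b4]; rewrite !ffunE !inordK.
move=> e; apply/ffunP => k; rewrite !ffunE.
by case: k => [[|[|[|[|k]]]] lt_k4] //=; congr (e _); apply: val_inj; rewrite /= inordK.
Qed.

Lemma sign_of_bools b1 b2 b3 b4 i :
  sign_of (ffun_of_bools (b1, b2, b3, b4)) i = nth false [:: false; b1; b2; b3; b4] i.
Proof.
by case: (unliftP ord0 i) => [k ->|->]; rewrite /sign_of ?liftK ?unlift_none ?ffunE.
Qed.

Section SquareRootProduct.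
Variable R : comNzRingType.

Lemma sqrtProd_signed : sqrtProd R =
  \prod_(e : {ffun 'I_4 -> bool}) \sum_(i < 5) (-1) ^+ sign_of e i *: 'X_i.
Proof.
apply: eq_bigr => e _; rewrite [RHS]big_ord_recl /sign_of unlift_none expr0 scale1r.
by congr (_ + _); apply: eq_bigr => k _; rewrite liftK.
Qed.

Lemma sqrtProdE :
  sqrtProd R = delta5 ('X_i0 ^+ 2) ('X_i1 ^+ 2) ('X_i2 ^+ 2) ('X_i3 ^+ 2) ('X_i4 ^+ 2).
Proof.
rewrite sqrtProd_signed (reindex ffun_of_bools) /=; last exact/onW_bij/ffun_of_bools_bij.
pose G b := \sum_(i < 5) (-1) ^+ sign_of (ffun_of_bools b) i *: ('X_i : {mpoly R[5]}).
have -> : \prod_b G b = \prod_b1 \prod_b2 \prod_b3 \prod_b4 G (b1, b2, b3, b4).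
  by rewrite !pair_bigA; apply: eq_big => // [[[[b1 b2] b3] b4]].
rewrite !big_bool /G !sum_ord5 !sign_of_bools /= !expr1 !expr0 !scaleN1r !scale1r.
rewrite /delta5 /esym_eval /delta_esym /esym1 /esym2 /esym3 /esym4 /esym5.
ring.
Qed.

Lemma Delta'E : Delta' R = delta5 'X_i0 'X_i1 'X_i2 'X_i3 'X_i4.
Proof.
have := rmorph_delta5 (comp_mpoly (squares R)) 'X_i0 'X_i1 'X_i2 'X_i3 'X_i4.
rewrite /= !comp_squaresXU -sqrtProdE => comp_delta5.
by rewrite -[RHS]mpoly_half_squares comp_delta5.
Qed.

Lemma Delta'_eval (x : 'I_5 -> R) :
  (Delta' R).@[x] = delta5 (x i0) (x i1) (x i2) (x i3) (x i4).
Proof. by rewrite Delta'E rmorph_delta5 /= !mevalXU. Qed.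

Lemma mderivXU_eval (x : 'I_5 -> R) i j : ('X_j^`M(i)).@[x] = (j == i)%:R.
Proof.
rewrite mderivX mnm1E; case: eqP => [->|_]; last by rewrite scale0r meval0.
have -> : (U_(i) - U_(i))%MM = 0%MM by apply/mnmP => k; rewrite mnmBE subnn mnm0E.
by rewrite mpolyX0 mevalZ meval1 mulr1.
Qed.

Lemma Delta'_deriv_eval (x : 'I_5 -> R) i :
  ((Delta' R)^`M(i)).@[x] =
  delta5_deriv (x i0) (x i1) (x i2) (x i3) (x i4)
    (i0 == i)%:R (i1 == i)%:R (i2 == i)%:R (i3 == i)%:R (i4 == i)%:R.
Proof.
rewrite Delta'E (@deriv_delta5 _ _ (meval x) (fun p => (p^`M(i)).@[x])).
- by rewrite /= !mevalXU !mderivXU_eval.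
- by move=> p q /=; rewrite mderivD rmorphD.
- by move=> p /=; rewrite mderivN rmorphN.
- by move=> p q /=; rewrite mderivM rmorphD !rmorphM.
Qed.

End SquareRootProduct.

Lemma quadric_sum_cases (R : numDomainType) (t0 t1 t2 t3 t4 : R) :
  t0 + t1 + t2 + t3 + t4 = 0 ->
  t0^+2 + t1^+2 + t2^+2 - 3 * t3^+2 - 3 * t4^+2 = 0 ->
  (t0^+2)^+2 + (t1^+2)^+2 + (t2^+2)^+2 + 9 * (t3^+2)^+2
    - t0^+2 * t1^+2 - t0^+2 * t2^+2 - 3 * t0^+2 * t3^+2
    - t1^+2 * t2^+2 - 3 * t1^+2 * t3^+2 - 3 * t2^+2 * t3^+2 = 0 ->
  [\/ t3 + t4 = 0, t0 + t3 + t4 = 0, t1 + t3 + t4 = 0 | t2 + t3 + t4 = 0].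
Proof.
move=> sum0 l0 q0.
have t2E : t2 = - (t0 + t1 + t3 + t4).
  by apply: (addIr (t0 + t1 + t3 + t4)); rewrite addNr -sum0; ring.
have : 24 * (t3 + t4) * ((t0 + t3 + t4) * (t1 + t3 + t4) * (t2 + t3 + t4)) = 0.
  rewrite -[RHS](_ : 0 * (0 - 12 * t3^+2 - 12 * t3 * t4) - 4 * 0 = 0); last by ring.
  by rewrite -{1 2}l0 -q0 t2E; ring.
move/eqP; rewrite !mulf_eq0 pnatr_eq0 /= => /orP[|/orP[/orP[]|]] /eqP.
- exact: Or41.
- exact: Or42.
- exact: Or43.
- exact: Or44.
Qed.

Section Singularities.
Variable C : numClosedFieldType.
Implicit Types x t : 'I_5 -> C.

Lemma delta5_signed_roots x : delta5 (x i0) (x i1) (x i2) (x i3) (x i4) = 0 ->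
  exists t, (forall i, t i ^+ 2 = x i) /\ \sum_i t i = 0.
Proof.
move=> delta_x; pose s i := sqrtC (x i).
have : (sqrtProd C).@[s] = 0 by rewrite sqrtProdE rmorph_delta5 /= !rmorphXn /= !mevalXU !sqrtCK.
rewrite sqrtProd_signed rmorph_prod => /eqP /prodf_eq0 [e _ /eqP].
rewrite rmorph_sum => sum_e0.
exists (fun i => (-1) ^+ sign_of e i * s i); split.
  by move=> i; rewrite exprMn sqrr_sign mul1r sqrtCK.
by rewrite -[RHS]sum_e0; apply: eq_bigr => i _; rewrite /= mevalZ mevalXU.
Qed.

Lemma inSingR_of_partials x :
  let: (x0, x1, x2, x3, x4) := (x i0, x i1, x i2, x i3, x i4) in
  delta5 x0 x1 x2 x3 x4 = 0 ->
  delta5_partial x0 x1 x2 x3 x4 x1 x2 x3 x4 = 0 ->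
  delta5_partial x0 x1 x2 x3 x4 x0 x2 x3 x4 = 0 ->
  delta5_partial x0 x1 x2 x3 x4 x0 x1 x3 x4 = 0 ->
  delta5_partial x0 x1 x2 x3 x4 x0 x1 x2 x4 = 0 ->
  delta5_partial x0 x1 x2 x3 x4 x0 x1 x2 x3 = 0 ->
  inSingR x.
Proof.
move=> /= delta0 d0 d1 d2 d3 d4; split=> [|i]; first by rewrite Delta'_eval.
rewrite Delta'_deriv_eval /delta5_deriv.
by case: i => [[|[|[|[|[|?]]]]] ?] //; rewrite -!val_eqE /= !mul0r !mul1r ?add0r ?addr0.
Qed.

Ltac delta_ring :=
  rewrite /delta5 /delta5_partial /esym_eval /delta_esym /delta_esym_d1
    /delta_esym_d2 /delta_esym_d3 /delta_esym_d4 /delta_esym_d5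
    /esym1 /esym2 /esym3 /esym4 /esym5; ring.

Lemma singR_S12_of_roots x t : (forall i, t i ^+ 2 = x i) ->
  t i0 + t i1 + t i2 + t i3 + t i4 = 0 -> t i0 + t i3 + t i4 = 0 ->
  inSingR x /\ inS i1 i2 i0 i3 i4 x.
Proof.
move=> tx sum0 h.
have t0E : t i0 = - (t i3 + t i4) by apply/eqP; rewrite -addr_eq0 addrA h.
have t2E : t i2 = - t i1.
  by apply/eqP; rewrite -addr_eq0 -sum0 t0E; apply/eqP; ring.
split; last by rewrite /inS -!tx t0E t2E; split; ring.
by apply: inSingR_of_partials; rewrite -!tx t0E t2E; delta_ring.
Qed.

Lemma singR_S02_of_roots x t : (forall i, t i ^+ 2 = x i) ->
  t i0 + t i1 + t i2 + t i3 + t i4 = 0 -> t i1 + t i3 + t i4 = 0 ->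
  inSingR x /\ inS i0 i2 i1 i3 i4 x.
Proof.
move=> tx sum0 h.
have t1E : t i1 = - (t i3 + t i4) by apply/eqP; rewrite -addr_eq0 addrA h.
have t2E : t i2 = - t i0.
  by apply/eqP; rewrite -addr_eq0 -sum0 t1E; apply/eqP; ring.
split; last by rewrite /inS -!tx t1E t2E; split; ring.
by apply: inSingR_of_partials; rewrite -!tx t1E t2E; delta_ring.
Qed.

Lemma singR_S01_of_roots x t : (forall i, t i ^+ 2 = x i) ->
  t i0 + t i1 + t i2 + t i3 + t i4 = 0 -> t i2 + t i3 + t i4 = 0 ->
  inSingR x /\ inS i0 i1 i2 i3 i4 x.
Proof.
move=> tx sum0 h.
have t2E : t i2 = - (t i3 + t i4) by apply/eqP; rewrite -addr_eq0 addrA h.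
have t1E : t i1 = - t i0.
  by apply/eqP; rewrite -addr_eq0 -sum0 t2E; apply/eqP; ring.
split; last by rewrite /inS -!tx t1E t2E; split; ring.
by apply: inSingR_of_partials; rewrite -!tx t1E t2E; delta_ring.
Qed.

Lemma singR_S34_of_roots x t : (forall i, t i ^+ 2 = x i) ->
  t i0 + t i1 + t i2 + t i3 + t i4 = 0 -> t i3 + t i4 = 0 ->
  inSingR x /\ inS i3 i4 i0 i1 i2 x.
Proof.
move=> tx sum0 h.
have t4E : t i4 = - t i3 by apply/eqP; rewrite -addr_eq0 addrC h.
have t2E : t i2 = - (t i0 + t i1).
  by apply/eqP; rewrite -addr_eq0 -sum0 t4E; apply/eqP; ring.
split; last by rewrite /inS -!tx t2E t4E; split; ring.
by apply: inSingR_of_partials; rewrite -!tx t2E t4E; delta_ring.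
Qed.

End Singularities.

Theorem mainTheorem12 (C : numClosedFieldType) (x : 'I_5 -> C) :
  proj_point x -> inQ x -> inR x ->
  inSingR x /\
  (inS i0 i1 i2 i3 i4 x \/ inS i0 i2 i1 i3 i4 x \/
   inS i1 i2 i0 i3 i4 x \/ inS i3 i4 i0 i1 i2 x).
Proof.
move=> _ [l0 q0]; rewrite /inR Delta'_eval => /delta5_signed_roots [t [tx sum0]].
rewrite sum_ord5 in sum0; move: l0 q0; rewrite /lform /qform -!tx => l0 q0.
case: (quadric_sum_cases sum0 l0 q0) => h.
- by have [? ?] := singR_S34_of_roots tx sum0 h; split=> //; right; right; right.
- by have [? ?] := singR_S12_of_roots tx sum0 h; split=> //; right; right; left.
- by have [? ?] := singR_S02_of_roots tx sum0 h; split=> //; right; left.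
- by have [? ?] := singR_S01_of_roots tx sum0 h; split=> //; left.
Qed.
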